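(* Let $G^c$ be a vertex-coloured graph with $n$ vertices and $c$ colours whose minimum degree satisfies $\delta(G^c)>(n-1)-\sqrt{n-1}$. Then $\gamma^t(G^c)\le c+1$.
   Context: A vertex-coloured graph $G^c$ with colour set $\{1,\dots,c\}$ is a finite simple graph in which every vertex receives exactly one colour and every colour appears on at least one vertex. A dominating set is tropical if every colour appears on at least one of its vertices; $\gamma^t(G^c)$ is the minimum size of a tropical dominating set. *)

From mathcomp Require Import all_boot.
From Stdlib Require Import Reals.
Set Implicit Arguments. Unset Strict Implicit. Unset Printing Implicit Defensive.

Definition simple_graph (T : finType) (e : rel T) : Prop :=
  symmetric e /\ irreflexive e.

Definition deg (T : finType) (e : rel T) (v : T) : nat := #|[set u | e v u]|.

(* Vertex colouring with colour set {1..c} (here 'I_c): every colour is used. *)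
Definition vertex_colouring (T : finType) (c : nat) (col : T -> 'I_c) : Prop :=
  forall k : 'I_c, exists v : T, col v = k.

Definition dominating (T : finType) (e : rel T) (D : {set T}) : Prop :=
  forall v : T, v \in D \/ exists2 u, u \in D & e u v.

Definition tropical (T : finType) (c : nat) (col : T -> 'I_c) (D : {set T}) : Prop :=
  forall k : 'I_c, exists2 v, v \in D & col v = k.

Definition tropical_dominating (T : finType) (e : rel T) (c : nat)
  (col : T -> 'I_c) (D : {set T}) : Prop :=
  dominating e D /\ tropical col D.

From mathcomp Require Import all_boot.
From Stdlib Require Import Reals Lra Psatz.

(* Take a rainbow set S, one vertex of each colour.  Every vertex left
   undominated by S is a non-neighbour of a fixed vertex of S, so there are at
   most m of them, where m < sqrt(n-1) bounds the size of every
   non-neighbourhood.  Their non-neighbourhoods cover at most m^2 < n vertices,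
   so some vertex w lies in none of them: w is equal or adjacent to every
   undominated vertex, and S + w is a tropical dominating set of size <= c+1. *)

Set Implicit Arguments.
Unset Strict Implicit.
Unset Printing Implicit Defensive.

Lemma card_bigcup_le (T I : finType) (A : {set I}) (F : I -> {set T}) :
  #|\bigcup_(x in A) F x| <= \sum_(x in A) #|F x|.
Proof.
elim/big_rec2: _ => [|i X n _ IH]; first by rewrite cards0.
by apply: leq_trans (leq_of_leqif (leq_card_setU _ _)) _; rewrite leq_add2l.
Qed.

Lemma exists_notin_bigcup (T I : finType) (U : {set I}) (F : I -> {set T})
    (m : nat) :
  (forall x, x \in U -> #|F x| <= m) -> #|U| * m < #|T| ->
  exists w, forall x, x \in U -> w \notin F x.
Proof.
move=> leFm ltUmT.
have ltFT : #|\bigcup_(x in U) F x| < #|T|.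
  apply: leq_ltn_trans (card_bigcup_le U F) (leq_ltn_trans _ ltUmT).
  by rewrite -sum_nat_const; apply: leq_sum.
have [w wF] : exists w, w \notin \bigcup_(x in U) F x.
  apply/existsP; rewrite -negb_forall; apply: contraL ltFT => /forallP allF.
  by rewrite -leqNgt; apply/subset_leq_card/subsetP => x _; apply: allF.
by exists w => x xU; apply: contra wF => wFx; apply/bigcupP; exists x.
Qed.

Lemma tropical_card_le (T : finType) (c : nat) (col : T -> 'I_c) :
  vertex_colouring col -> exists2 S : {set T}, tropical col S & #|S| <= c.
Proof.
move=> colP.
have colW (k : 'I_c) : exists v, col v == k by have [v /eqP] := colP k; exists v.
pose pick_col k := xchoose (colW k).
exists (pick_col @: setT).
  by move=> k; exists (pick_col k); [apply: imset_f | apply/eqP/(xchooseP (colW k))].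
by apply: leq_trans (leq_imset_card _ _) _; rewrite cardsT card_ord.
Qed.

Lemma sq_lt_of_sqrt_bound (d m : nat) :
  (INR (d + m) - sqrt (INR (d + m)) < INR d)%R -> m * m < d + m.
Proof.
rewrite plus_INR => lt_sqrt.
have d_ge0 := pos_INR d; have m_ge0 := pos_INR m.
have sqrtK := sqrt_sqrt (INR d + INR m) ltac:(lra).
have sqrt_ge0 := sqrt_pos (INR d + INR m).
have : (INR m * INR m < INR d + INR m)%R by nra.
by rewrite -mult_INR -plus_INR => /INR_lt /ltP.
Qed.

Section NonNeighbourhood.

Variables (T : finType) (e : rel T).

Definition nonnbr (x : T) : {set T} := ~: (x |: [set y | e x y]).

Lemma in_nonnbr x y : (y \in nonnbr x) = (y != x) && ~~ e x y.
Proof. by rewrite !inE negb_or. Qed.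

Hypothesis e_irr : irreflexive e.

Lemma card_nonnbr x : #|T| = (deg e x + #|nonnbr x|).+1.
Proof. by rewrite -(cardsC (x |: [set y | e x y])) cardsU1 inE e_irr. Qed.

Lemma sq_card_nonnbr_lt x :
  (INR #|T| - 1 - sqrt (INR #|T| - 1) < INR (deg e x))%R ->
  #|nonnbr x| * #|nonnbr x| < #|T|.
Proof.
have n1 : (INR #|T| - 1 = INR (deg e x + #|nonnbr x|))%R.
  by rewrite (card_nonnbr x) S_INR; ring.
rewrite n1 => /sq_lt_of_sqrt_bound lt_sq.
by rewrite (card_nonnbr x) ltnS ltnW.
Qed.

End NonNeighbourhood.

Lemma dominating_setU1 (T : finType) (e : rel T) (S : {set T}) (w : T) :
  (forall v, v \notin S -> (forall u, u \in S -> ~~ e u v) -> v = w \/ e w v) ->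
  dominating e (w |: S).
Proof.
move=> closeW v; have [vS|vNS] := boolP (v \in S).
  by left; rewrite setU1r.
have [/exists_inP [u uS euv]|] := boolP [exists u in S, e u v].
  by right; exists u; rewrite ?setU1r.
rewrite negb_exists_in => /forall_inP /(closeW v vNS) [->|ewv].
  by left; rewrite setU11.
by right; exists w; rewrite ?setU11.
Qed.

Theorem mainTheorem8 (T : finType) (e : rel T) (c : nat) (col : T -> 'I_c) :
  simple_graph e ->
  vertex_colouring col ->
  (forall v : T,
     (INR #|T| - 1 - sqrt (INR #|T| - 1) < INR (deg e v))%R) ->
  exists D : {set T}, tropical_dominating e col D /\ #|D| <= c.+1.
Proof.
move=> [e_sym e_irr] colP degP.
have [S tropS cardS] := tropical_card_le colP.
have [S0|[s0 s0S]] := set_0Vmem S.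
  exists S; split; last by rewrite ltnW.
  by split=> // v; have [u] := tropS (col v); rewrite S0 inE.
pose U := [set v | (v \notin S) && [forall u in S, ~~ e u v]].
have U_nonnbr : U \subset nonnbr e s0.
  apply/subsetP => v /setIdP [vNS /forall_inP /(_ s0 s0S) es0v].
  by rewrite in_nonnbr es0v andbT; apply: contraNneq vNS => ->.
pose xm := [arg max_(x > s0) #|nonnbr e x|].
have nonnbr_max x : #|nonnbr e x| <= #|nonnbr e xm|.
  by rewrite /xm; case: arg_maxnP => // y _; apply.
have [w wP] : exists w, forall x, x \in U -> w \notin nonnbr e x.
  apply: (exists_notin_bigcup (m := #|nonnbr e xm|)) => [x _ //|].
  apply: leq_ltn_trans (sq_card_nonnbr_lt e_irr (degP xm)).
  by rewrite leq_mul2r (leq_trans (subset_leq_card U_nonnbr)) ?orbT.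
exists (w |: S); split; last by rewrite cardsU1 (leq_add (leq_b1 _) cardS).
split; last by move=> k; have [v vS <-] := tropS k; exists v; rewrite ?setU1r.
apply: dominating_setU1 => v vNS Sv.
have vU : v \in U by rewrite inE vNS; apply/forall_inP.
move: (wP v vU); rewrite in_nonnbr negb_and !negbK e_sym.
by case/orP => [/eqP ->|]; [left | right].
Qed.
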